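(* (1) Invariance: if $t\to_w u$ then $t\equiv_S u$. (2) Compatibility: if $t\equiv_S u$ then $C\langle t\rangle\equiv_S C\langle u\rangle$ for every context $C$.
   Context: Terms: $t ::= x \mid \lambda x.t \mid t\,u \mid t[x\backslash u]$ ($t[x\backslash u]$ an explicit substitution binding $x$ in $t$; terms up to $\alpha$). Values $v ::= \lambda x.t$. Substitution contexts $S ::= \langle\cdot\rangle\mid S[x\backslash u]$. Weak contexts $W ::= \langle\cdot\rangle \mid W\,t \mid t\,W \mid t[x\backslash W] \mid W[x\backslash u]$; $W\langle\langle t\rangle\rangle$ is plugging without capture of free variables of $t$. Root rules: $S\langle\lambda x.t\rangle u\mapsto_m S\langle t[x\backslash u]\rangle$; $W\langle\langle x\rangle\rangle[x\backslash u]\mapsto_e W\langle\langle u\rangle\rangle[x\backslash u]$; $t[x\backslash S\langle v\rangle]\mapsto_{gcv} S\langle t\rangle$ if $x\notin\mathrm{fv}(t)$. $\to_w$ is the union of their closures under weak contexts. A context $C$ is a term with exactly one hole anywhere. Contextual equivalence $\equiv_S$: $t\equiv_S u$ iff for every context $C$ such that $C\langle t\rangle$ and $C\langle u\rangle$ are closed, $C\langle t\rangle$ is weakly $\to_w$-normalizing iff $C\langle u\rangle$ is. *)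

(* Lambda calculus with explicit substitutions (the weak
   value substitution calculus), terms in de Bruijn notation (= terms up to alpha). *)
From Stdlib Require Import Arith List Relations.

(* t ::= x | \x.t | t u | t[x\u]  ;  [ES t u] is t[x\u], binding index 0 in t. *)
Inductive term : Type :=
| Var : nat -> term
| Lam : term -> term
| App : term -> term -> term
| ES  : term -> term -> term.

Fixpoint lift (c k : nat) (t : term) : term :=
  match t with
  | Var n => if c <=? n then Var (n + k) else Var n
  | Lam t => Lam (lift (S c) k t)
  | App t u => App (lift c k t) (lift c k u)
  | ES t u => ES (lift (S c) k t) (lift c k u)
  end.

(* decrement every free index > c (used when index c does not occur free) *)
Fixpoint lower (c : nat) (t : term) : term :=
  match t with
  | Var n => if c <? n then Var (n - 1) else Var n
  | Lam t => Lam (lower (S c) t)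
  | App t u => App (lower c t) (lower c u)
  | ES t u => ES (lower (S c) t) (lower c u)
  end.

Fixpoint free (n : nat) (t : term) : bool :=
  match t with
  | Var m => Nat.eqb m n
  | Lam t => free (S n) t
  | App t u => free n t || free n u
  | ES t u => free (S n) t || free n u
  end.

Fixpoint scoped (n : nat) (t : term) : bool :=
  match t with
  | Var m => m <? n
  | Lam t => scoped (S n) t
  | App t u => scoped n t && scoped n u
  | ES t u => scoped (S n) t && scoped n u
  end.

Definition closed (t : term) : Prop := scoped 0 t = true.

Definition is_value (t : term) : Prop := exists b, t = Lam b.

(* substitution contexts S ::= <.> | S[x\u]; head of the list is outermost *)
Definition sctx := list term.
Fixpoint plug_s (s : sctx) (t : term) : term :=
  match s with
  | nil => t
  | u :: s' => ES (plug_s s' t) u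
  end.

(* weak contexts W ::= <.> | W t | t W | t[x\W] | W[x\u] *)
Inductive wctx : Type :=
| WHole : wctx
| WAppL : wctx -> term -> wctx
| WAppR : term -> wctx -> wctx
| WESR  : term -> wctx -> wctx
| WESL  : wctx -> term -> wctx.

(* plugging (may capture) *)
Fixpoint plug_w (W : wctx) (t : term) : term :=
  match W with
  | WHole => t
  | WAppL W u => App (plug_w W t) u
  | WAppR u W => App u (plug_w W t)
  | WESR u W => ES u (plug_w W t)
  | WESL W u => ES (plug_w W t) u
  end.

(* number of binders the hole of W lies under *)
Fixpoint wdepth (W : wctx) : nat :=
  match W with
  | WHole => 0
  | WAppL W _ | WAppR _ W | WESR _ W => wdepth W
  | WESL W _ => S (wdepth W)
  end.

Inductive root_step : term -> term -> Prop :=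
| R_m : forall (s : sctx) t u,
    root_step (App (plug_s s (Lam t)) u)
              (plug_s s (ES t (lift 0 (length s) u)))
| R_e : forall (W : wctx) u,
    (* W<<x>>[x\u] -> W<<u>>[x\u], x the variable bound by the outer ES,
       plugged without capture *)
    root_step (ES (plug_w W (Var (wdepth W))) u)
              (ES (plug_w W (lift 0 (S (wdepth W)) u)) u)
| R_gcv : forall t (s : sctx) v,
    is_value v -> free 0 t = false ->
    root_step (ES t (plug_s s v))
              (plug_s s (lift 0 (length s) (lower 0 t))).

Definition wstep (t u : term) : Prop :=
  exists (W : wctx) r r', root_step r r' /\ t = plug_w W r /\ u = plug_w W r'.

Definition wnormal (t : term) : Prop := forall u, ~ wstep t u.

Definition weakly_normalizing (t : term) : Prop :=
  exists u, clos_refl_trans term wstep t u /\ wnormal u.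

Inductive ctx : Type :=
| CHole : ctx
| CLam  : ctx -> ctx
| CAppL : ctx -> term -> ctx
| CAppR : term -> ctx -> ctx
| CESL  : ctx -> term -> ctx
| CESR  : term -> ctx -> ctx.

(* plugging with capture *)
Fixpoint plug (C : ctx) (t : term) : term :=
  match C with
  | CHole => t
  | CLam C => Lam (plug C t)
  | CAppL C u => App (plug C t) u
  | CAppR u C => App u (plug C t)
  | CESL C u => ES (plug C t) u
  | CESR u C => ES u (plug C t)
  end.

Definition ctx_equiv (t u : term) : Prop :=
  forall C : ctx, closed (plug C t) -> closed (plug C u) ->
    (weakly_normalizing (plug C t) <-> weakly_normalizing (plug C u)).

(* Weak normalization is characterized by typability in a system of non-idempotent
   intersection (multi) types in which arguments and explicit substitutions also
   receive a base type.  The size of a derivation strictly decreases along ->_w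
   steps, so typable terms are weakly normalizing; conversely every weak normal form
   is typable, and each root rule preserves typability backwards as well.  Typing is
   compositional, so a root step r -> r' can be transported through any context:
   C<r> is typable iff C<r'> is.  Hence t ->_w u makes C<t> and C<u> weakly
   normalizing together, and compatibility is just composition of contexts. *)

From Stdlib Require Import Arith List Relations Lia Permutation Setoid Morphisms Classical.
Import ListNotations.

Lemma lift_zero t c : lift c 0 t = t.
Proof.
  revert c; induction t; intros c; simpl; rewrite ?IHt, ?IHt1, ?IHt2; auto.
  destruct (c <=? n); f_equal; lia.
Qed.

Lemma lift_lift t c j k : lift c k (lift c j t) = lift c (j + k) t.
Proof.
  revert c; induction t; intros c; simpl; rewrite ?IHt, ?IHt1, ?IHt2; auto.
  destruct (Nat.leb_spec c n); simpl.
  - destruct (Nat.leb_spec c (n + j)); [f_equal; lia | lia].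
  - destruct (Nat.leb_spec c n); [lia | auto].
Qed.

Lemma lift_succ t k : lift 0 (S k) t = lift 0 k (lift 0 1 t).
Proof. now rewrite lift_lift. Qed.

Lemma lift_lower t c : free c t = false -> lift c 1 (lower c t) = t.
Proof.
  revert c; induction t; intros c H; simpl in *.
  - destruct (Nat.ltb_spec c n); simpl.
    + destruct (Nat.leb_spec c (n - 1)); [f_equal; lia | lia].
    + destruct (Nat.leb_spec c n); [apply Nat.eqb_neq in H; lia | auto].
  - now rewrite IHt.
  - apply Bool.orb_false_iff in H as [H1 H2]. now rewrite IHt1, IHt2.
  - apply Bool.orb_false_iff in H as [H1 H2]. now rewrite IHt1, IHt2.
Qed.

Fixpoint ctx_of_wctx (W : wctx) : ctx :=
  match W with
  | WHole => CHole
  | WAppL W u => CAppL (ctx_of_wctx W) u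
  | WAppR u W => CAppR u (ctx_of_wctx W)
  | WESR u W => CESR u (ctx_of_wctx W)
  | WESL W u => CESL (ctx_of_wctx W) u
  end.

Lemma plug_w_ctx W t : plug_w W t = plug (ctx_of_wctx W) t.
Proof. induction W; simpl; congruence. Qed.

Fixpoint ctx_comp (C D : ctx) : ctx :=
  match C with
  | CHole => D
  | CLam C => CLam (ctx_comp C D)
  | CAppL C u => CAppL (ctx_comp C D) u
  | CAppR u C => CAppR u (ctx_comp C D)
  | CESL C u => CESL (ctx_comp C D) u
  | CESR u C => CESR u (ctx_comp C D)
  end.

Lemma plug_ctx_comp C D t : plug (ctx_comp C D) t = plug C (plug D t).
Proof. induction C; simpl; congruence. Qed.

Fixpoint wctx_comp (W V : wctx) : wctx :=
  match W with
  | WHole => V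
  | WAppL W u => WAppL (wctx_comp W V) u
  | WAppR u W => WAppR u (wctx_comp W V)
  | WESR u W => WESR u (wctx_comp W V)
  | WESL W u => WESL (wctx_comp W V) u
  end.

Lemma plug_w_comp W V t : plug_w (wctx_comp W V) t = plug_w W (plug_w V t).
Proof. induction W; simpl; congruence. Qed.

Lemma wnormal_plug_w W t : wnormal (plug_w W t) -> wnormal t.
Proof.
  intros H u (V & r & r' & Hr & -> & ->). apply (H (plug_w W (plug_w V r'))).
  exists (wctx_comp W V), r, r'. now rewrite !plug_w_comp.
Qed.

(** * Multi types and type environments *)

Inductive ty : Type := Base : ty | Arr : list ty -> ty -> ty.

Fixpoint ty_eq_dec (A B : ty) {struct A} : {A = B} + {A <> B}.
Proof.
  refine (match A, B with
          | Base, Base => left eq_refl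
          | Arr M A', Arr N B' =>
              match list_eq_dec ty_eq_dec M N, ty_eq_dec A' B' with
              | left _, left _ => left _
              | _, _ => right _
              end
          | _, _ => right _
          end); congruence.
Defined.

Definition mult (B : ty) (M : list ty) : nat := count_occ ty_eq_dec M B.

Definition mset_eq (M N : list ty) : Prop := forall B, mult B M = mult B N.

Lemma mset_eq_perm M N : mset_eq M N -> Permutation M N.
Proof. apply (Permutation_count_occ ty_eq_dec). Qed.

Lemma mset_eq_nil M : mset_eq M [] -> M = [].
Proof.
  destruct M as [|B M]; intros H; auto.
  specialize (H B). unfold mult in H. simpl in H.
  destruct (ty_eq_dec B B); [discriminate | congruence].
Qed.

Definition env := nat -> list ty.
Definition env0 : env := fun _ => [].
Definition env_add (G D : env) : env := fun i => G i ++ D i.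
Definition env_cons (M : list ty) (G : env) : env :=
  fun i => match i with 0 => M | S j => G j end.
Definition env_tl (G : env) : env := fun i => G (S i).
Definition env_one (n : nat) (M : list ty) : env :=
  fun i => if i =? n then M else [].
(* [env_shift c k] is to environments what [lift c k] is to terms. *)
Definition env_shift (c k : nat) (G : env) : env :=
  fun i => if i <? c then G i else if i <? c + k then [] else G (i - k).

Definition env_eq (G D : env) : Prop := forall i, mset_eq (G i) (D i).

(* Every equation between environments built from the operations above reduces,
   pointwise and per type, to linear arithmetic on multiplicities. *)
Ltac env_unfold :=
  unfold mset_eq, mult, env_add, env_cons, env0, env_tl, env_shift in *;
  simpl in *; repeat rewrite count_occ_app in *; simpl in *.

Ltac env_inst i B := repeat match goal with
  | H : env_eq _ _ |- _ =>
      pose proof (H i B); pose proof (H (S i) B); pose proof (H 0 B); clear H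
  end.

Ltac env_solve :=
  let i := fresh "i" in let B := fresh "B" in
  intros i B; destruct i as [|i]; [env_inst 0 B | env_inst i B]; env_unfold; lia.

Lemma env_eq_refl G : env_eq G G. Proof. now intros i B. Qed.
Lemma env_eq_sym G D : env_eq G D -> env_eq D G. Proof. intros H i B; symmetry; apply H. Qed.
Lemma env_eq_trans G D E : env_eq G D -> env_eq D E -> env_eq G E.
Proof. intros H1 H2 i B; rewrite H1; apply H2. Qed.

Add Parametric Relation : env env_eq
  reflexivity proved by env_eq_refl symmetry proved by env_eq_sym
  transitivity proved by env_eq_trans as env_eq_rel.

#[local] Instance env_add_proper : Proper (env_eq ==> env_eq ==> env_eq) env_add.
Proof. intros G G' HG D D' HD. env_solve. Qed.
#[local] Instance env_tl_proper : Proper (env_eq ==> env_eq) env_tl.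
Proof. intros G G' H i B. apply H. Qed.

#[local] Instance env_shift_proper c k : Proper (env_eq ==> env_eq) (env_shift c k).
Proof.
  intros G G' H i B. unfold env_shift.
  destruct (i <? c); [apply H | destruct (i <? c + k); [reflexivity | apply H]].
Qed.

Lemma env_add_0_l G : env_eq (env_add env0 G) G. Proof. env_solve. Qed.
Lemma env_add_0_r G : env_eq (env_add G env0) G. Proof. env_solve. Qed.

Ltac nat_cases := repeat match goal with
  | |- context [?a <? ?b] => destruct (Nat.ltb_spec a b)
  | |- context [?a =? ?b] => destruct (Nat.eqb_spec a b)
  end.

Lemma env_shift_add c k G D :
  env_eq (env_shift c k (env_add G D)) (env_add (env_shift c k G) (env_shift c k D)).
Proof. intros i B. unfold env_shift, env_add. nat_cases; env_unfold; lia. Qed.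
Lemma env_shift_0 c k : env_eq (env_shift c k env0) env0.
Proof. intros i B. unfold env_shift, env0. now nat_cases. Qed.
Lemma env_shift_cons c k M G :
  env_eq (env_shift (S c) k (env_cons M G)) (env_cons M (env_shift c k G)).
Proof.
  intros [|i] B; unfold env_shift; cbn [env_cons]; nat_cases; try reflexivity; try lia.
  now replace (S i - k) with (S (i - k)) by lia.
Qed.
Lemma env_shift_tl c k G : env_eq (env_tl (env_shift (S c) k G)) (env_shift c k (env_tl G)).
Proof.
  intros i B. unfold env_shift, env_tl. nat_cases; try reflexivity; try lia.
  now replace (S i - k) with (S (i - k)) by lia.
Qed.
Lemma env_shift_one_ge c k m M : c <= m -> env_eq (env_shift c k (env_one m M)) (env_one (m + k) M).
Proof. intros H i B. unfold env_shift, env_one. nat_cases; reflexivity || lia. Qed.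
Lemma env_shift_one_lt c k m M : m < c -> env_eq (env_shift c k (env_one m M)) (env_one m M).
Proof. intros H i B. unfold env_shift, env_one. nat_cases; reflexivity || lia. Qed.
Lemma env_shift_0_1 G : env_eq (env_shift 0 1 G) (env_cons [] G).
Proof. intros [|i] B; unfold env_shift; simpl; now rewrite ?Nat.sub_0_r. Qed.

Lemma env_cons_tl M G : mset_eq M (G 0) -> env_eq (env_cons M (env_tl G)) G.
Proof. intros H [|i] B; simpl; [apply H | reflexivity]. Qed.
Lemma env_tl_cons M G : env_eq (env_tl (env_cons M G)) G.
Proof. now intros i B. Qed.
Lemma env_one_nil k : env_eq (env_one k []) env0.
Proof. intros i B; unfold env_one; now destruct (i =? k). Qed.
Lemma env_one_app k M N : env_eq (env_one k (M ++ N)) (env_add (env_one k M) (env_one k N)).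
Proof. intros i B; unfold env_one, env_add; now destruct (i =? k). Qed.
Lemma env_one_S k M : env_eq (env_one (S k) M) (env_cons [] (env_one k M)).
Proof. now intros [|i] B. Qed.

Lemma env_cons_inj M N G D : env_eq (env_cons M G) (env_cons N D) -> mset_eq M N /\ env_eq G D.
Proof. intros H; split; [intros B; apply (H 0 B) | intros i B; apply (H (S i) B)]. Qed.

Lemma env_add_cons_nil D D' :
  env_eq (env_add D (env_cons [] D')) (env_cons (D 0) (env_add (env_tl D) D')).
Proof. intros [|i] B; env_unfold; lia. Qed.

Lemma env_add_one_0 D L : env_eq (env_add D (env_one 0 L)) (env_cons (D 0 ++ L) (env_tl D)).
Proof. intros [|i] B; unfold env_one; env_unfold; lia. Qed.

(* [n] is the size of the derivation.  An argument or an explicit substitution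
   is always typed with an extra [Base], which forces it to be normalizing. *)
Inductive typed : env -> term -> ty -> nat -> Prop :=
| TVar : forall G n A, env_eq G (env_one n [A]) -> typed G (Var n) A 1
| TLamBase : forall G b, env_eq G env0 -> typed G (Lam b) Base 1
| TLam : forall G b M A k, typed (env_cons M G) b A k -> typed G (Lam b) (Arr M A) (S k)
| TApp : forall G G1 G2 t u M A k1 k2,
    typed G1 t (Arr M A) k1 -> mtyped G2 u (Base :: M) k2 -> env_eq G (env_add G1 G2) ->
    typed G (App t u) A (S (k1 + k2))
| TES : forall G G1 G2 t u M A k1 k2,
    typed (env_cons M G1) t A k1 -> mtyped G2 u (Base :: M) k2 -> env_eq G (env_add G1 G2) ->
    typed G (ES t u) A (S (k1 + k2))
with mtyped : env -> term -> list ty -> nat -> Prop :=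
| TMNil : forall G u, env_eq G env0 -> mtyped G u [] 0
| TMCons : forall G G1 G2 u B M n1 n2,
    typed G1 u B n1 -> mtyped G2 u M n2 -> env_eq G (env_add G1 G2) ->
    mtyped G u (B :: M) (n1 + n2).

Definition typable (t : term) : Prop := exists G A n, typed G t A n.

Lemma typed_size_pos G t A n : typed G t A n -> 1 <= n.
Proof. intros H; inversion H; lia. Qed.

Lemma mtyped_nil_inv G u n : mtyped G u [] n -> env_eq G env0 /\ n = 0.
Proof. intros H; inversion H; subst; auto. Qed.
Lemma mtyped_cons_inv G u B M n : mtyped G u (B :: M) n ->
  exists G1 G2 n1 n2, typed G1 u B n1 /\ mtyped G2 u M n2 /\ env_eq G (env_add G1 G2) /\ n = n1 + n2.
Proof. intros H; inversion H; subst; eauto 10. Qed.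
Lemma typed_var_inv G m A n : typed G (Var m) A n -> env_eq G (env_one m [A]) /\ n = 1.
Proof. intros H; inversion H; subst; auto. Qed.
Lemma typed_lam_inv G b A n : typed G (Lam b) A n ->
  (A = Base /\ env_eq G env0 /\ n = 1) \/
  (exists M B k, A = Arr M B /\ typed (env_cons M G) b B k /\ n = S k).
Proof. intros H; inversion H; subst; eauto 10. Qed.
Lemma typed_app_inv G t u A n : typed G (App t u) A n ->
  exists G1 G2 M k1 k2, typed G1 t (Arr M A) k1 /\ mtyped G2 u (Base :: M) k2 /\
    env_eq G (env_add G1 G2) /\ n = S (k1 + k2).
Proof. intros H; inversion H; subst; eauto 10. Qed.
Lemma typed_es_inv G t u A n : typed G (ES t u) A n ->
  exists G1 G2 M k1 k2, typed (env_cons M G1) t A k1 /\ mtyped G2 u (Base :: M) k2 /\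
    env_eq G (env_add G1 G2) /\ n = S (k1 + k2).
Proof. intros H; inversion H; subst; eauto 10. Qed.

Lemma typed_env_eq t G G' A n : env_eq G G' -> typed G t A n -> typed G' t A n.
Proof.
  revert G G' A n; induction t; intros G G' A k E H; inversion H; subst.
  - constructor. now rewrite <- E.
  - constructor. now rewrite <- E.
  - constructor. eapply IHt; [|eauto]. env_solve.
  - econstructor; eauto. now rewrite <- E.
  - econstructor; eauto. now rewrite <- E.
Qed.

Lemma mtyped_env_eq u G G' M n : env_eq G G' -> mtyped G u M n -> mtyped G' u M n.
Proof.
  intros E H; inversion H; subst.
  - constructor. now rewrite <- E.
  - econstructor; eauto. now rewrite <- E.
Qed.

#[local] Instance typed_proper : Proper (env_eq ==> eq ==> eq ==> eq ==> iff) typed.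
Proof.
  intros G G' E t _ <- A _ <- n _ <-.
  split; apply typed_env_eq; [| symmetry]; exact E.
Qed.
#[local] Instance mtyped_proper : Proper (env_eq ==> eq ==> eq ==> eq ==> iff) mtyped.
Proof.
  intros G G' E t _ <- A _ <- n _ <-.
  split; apply mtyped_env_eq; [| symmetry]; exact E.
Qed.

Lemma mtyped_one G u A n : typed G u A n -> mtyped G u [A] n.
Proof.
  intros H. rewrite <- (Nat.add_0_r n).
  econstructor; [eauto | now constructor | symmetry; apply env_add_0_r].
Qed.

Lemma mtyped_one_inv G u A n : mtyped G u [A] n -> typed G u A n.
Proof.
  intros (G1 & G2 & n1 & n2 & H1 & H2 & E & ->)%mtyped_cons_inv.
  apply mtyped_nil_inv in H2 as [E2 ->]. now rewrite E, E2, env_add_0_r, Nat.add_0_r.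
Qed.

Lemma mtyped_app u M1 M2 G1 G2 n1 n2 : mtyped G1 u M1 n1 -> mtyped G2 u M2 n2 ->
  mtyped (env_add G1 G2) u (M1 ++ M2) (n1 + n2).
Proof.
  revert G1 n1; induction M1; intros G1 n1 H1 H2; inversion H1; subst; simpl.
  - rewrite H, env_add_0_l. exact H2.
  - rewrite <- Nat.add_assoc. econstructor; [eauto | eapply IHM1; eauto | env_solve].
Qed.

Lemma mtyped_app_inv u M1 M2 G n : mtyped G u (M1 ++ M2) n ->
  exists G1 G2 n1 n2, mtyped G1 u M1 n1 /\ mtyped G2 u M2 n2 /\ env_eq G (env_add G1 G2) /\
    n = n1 + n2.
Proof.
  revert G n; induction M1; intros G n H; simpl in *.
  - exists env0, G, 0, n. split; [now constructor |].
    split; [exact H | split; [now rewrite env_add_0_l | reflexivity]].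
  - apply mtyped_cons_inv in H as (G1 & G2 & n1 & n2 & H1 & H2 & E & ->).
    destruct (IHM1 _ _ H2) as (Ga & Gb & na & nb & Ha & Hb & E' & ->).
    exists (env_add G1 Ga), Gb, (n1 + na), nb. repeat split; auto; [| env_solve | lia].
    econstructor; eauto. reflexivity.
Qed.

Lemma mtyped_perm u M M' G n : Permutation M M' -> mtyped G u M n -> mtyped G u M' n.
Proof.
  intros P; revert G n; induction P; intros G k H; auto.
  - apply mtyped_cons_inv in H as (G1 & G2 & n1 & n2 & H1 & H2 & E & ->).
    econstructor; eauto.
  - apply mtyped_cons_inv in H as (G1 & G2 & n0 & n & H1 & H5 & E & ->).
    apply mtyped_cons_inv in H5 as (G3 & G4 & n1 & n2 & H3 & H4 & E' & ->).
    replace (n0 + (n1 + n2)) with (n1 + (n0 + n2)) by lia.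
    econstructor; [eauto | econstructor; [eauto | eauto | reflexivity] | env_solve].
Qed.

Lemma mtyped_mset_eq u M M' G n : mset_eq M M' ->
  mtyped G u (Base :: M) n -> mtyped G u (Base :: M') n.
Proof. intros HM. apply mtyped_perm, perm_skip, mset_eq_perm, HM. Qed.

(** * Weakening and strengthening *)

Lemma mtyped_shift_of c k u u' :
  (forall G A n, typed G u A n -> typed (env_shift c k G) u' A n) ->
  forall G M n, mtyped G u M n -> mtyped (env_shift c k G) u' M n.
Proof.
  intros Hu G M; revert G; induction M; intros G n H.
  - apply mtyped_nil_inv in H as [E ->]. constructor. now rewrite E, env_shift_0.
  - apply mtyped_cons_inv in H as (G1 & G2 & n1 & n2 & H1 & H2 & E & ->).
    apply TMCons with (env_shift c k G1) (env_shift c k G2); auto.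
    now rewrite E, env_shift_add.
Qed.

Lemma mtyped_unshift_of c k u u' :
  (forall D A n, typed D u' A n -> exists G, env_eq D (env_shift c k G) /\ typed G u A n) ->
  forall D M n, mtyped D u' M n -> exists G, env_eq D (env_shift c k G) /\ mtyped G u M n.
Proof.
  intros Hu D M; revert D; induction M; intros D n H.
  - apply mtyped_nil_inv in H as [E ->]. exists env0.
    split; [now rewrite E, env_shift_0 | now constructor].
  - apply mtyped_cons_inv in H as (D1 & D2 & n1 & n2 & H1 & H2 & E & ->).
    destruct (Hu _ _ _ H1) as (G1 & E1 & T1). destruct (IHM _ _ H2) as (G2 & E2 & T2).
    exists (env_add G1 G2). split; [now rewrite E, E1, E2, env_shift_add |].
    econstructor; eauto. reflexivity.
Qed.

Lemma typed_lift t c k G A n : typed G t A n -> typed (env_shift c k G) (lift c k t) A n.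
Proof.
  revert c G A n; induction t; intros c G A m H; simpl.
  - apply typed_var_inv in H as [E ->].
    destruct (Nat.leb_spec c n); constructor; rewrite E;
      [now apply env_shift_one_ge | now apply env_shift_one_lt].
  - apply typed_lam_inv in H as [(-> & E & ->) | (M & B & k' & -> & H & ->)].
    + constructor. now rewrite E, env_shift_0.
    + constructor. rewrite <- env_shift_cons. now apply IHt.
  - apply typed_app_inv in H as (G1 & G2 & M & k1 & k2 & H1 & H2 & E & ->).
    apply TApp with (env_shift c k G1) (env_shift c k G2) M.
    + now apply IHt1.
    + exact (mtyped_shift_of c k t2 _ (IHt2 c) _ _ _ H2).
    + now rewrite E, env_shift_add.
  - apply typed_es_inv in H as (G1 & G2 & M & k1 & k2 & H1 & H2 & E & ->).
    apply TES with (env_shift c k G1) (env_shift c k G2) M.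
    + rewrite <- env_shift_cons. now apply IHt1.
    + exact (mtyped_shift_of c k t2 _ (IHt2 c) _ _ _ H2).
    + now rewrite E, env_shift_add.
Qed.

Lemma typed_unlift t c k D A n : typed D (lift c k t) A n ->
  exists G, env_eq D (env_shift c k G) /\ typed G t A n.
Proof.
  revert c D A n; induction t; intros c D A m H; simpl in H.
  - exists (env_one n [A]).
    destruct (Nat.leb_spec c n); apply typed_var_inv in H as [E ->];
      (split; [rewrite E; symmetry | now constructor]).
    + now apply env_shift_one_ge.
    + now apply env_shift_one_lt.
  - apply typed_lam_inv in H as [(-> & E & ->) | (M & B & k' & -> & H & ->)].
    + exists env0. split; [now rewrite E, env_shift_0 | now constructor].
    + destruct (IHt _ _ _ _ H) as (G & E & T). exists (env_tl G). split.
      * now rewrite <- env_shift_tl, <- E, env_tl_cons.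
      * constructor. rewrite env_cons_tl; [exact T |]. intro B0. apply (E 0 B0).
  - apply typed_app_inv in H as (D1 & D2 & M & k1 & k2 & H1 & H2 & E & ->).
    destruct (IHt1 _ _ _ _ H1) as (G1 & E1 & T1).
    destruct (mtyped_unshift_of c k t2 _ (IHt2 c) _ _ _ H2) as (G2 & E2 & T2).
    exists (env_add G1 G2). split; [now rewrite E, E1, E2, env_shift_add |].
    econstructor; eauto. reflexivity.
  - apply typed_es_inv in H as (D1 & D2 & M & k1 & k2 & H1 & H2 & E & ->).
    destruct (IHt1 _ _ _ _ H1) as (G1 & E1 & T1).
    destruct (mtyped_unshift_of c k t2 _ (IHt2 c) _ _ _ H2) as (G2 & E2 & T2).
    exists (env_add (env_tl G1) G2). split.
    + now rewrite E, E2, env_shift_add, <- env_shift_tl, <- E1, env_tl_cons.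
    + econstructor; [| eauto | reflexivity]. rewrite env_cons_tl; [exact T1 |].
      intro B0. apply (E1 0 B0).
Qed.

Lemma typed_lift1 G t A n : typed G t A n -> typed (env_cons [] G) (lift 0 1 t) A n.
Proof. intros H. rewrite <- env_shift_0_1. now apply typed_lift. Qed.

Lemma typed_unlift1 D t A n : typed D (lift 0 1 t) A n ->
  exists G, env_eq D (env_cons [] G) /\ typed G t A n.
Proof. intros H. setoid_rewrite <- env_shift_0_1. now apply typed_unlift. Qed.

Lemma mtyped_lift1 G u M n : mtyped G u M n -> mtyped (env_cons [] G) (lift 0 1 u) M n.
Proof.
  intros H. rewrite <- env_shift_0_1. apply (mtyped_shift_of 0 1 u); auto.
  intros; now apply typed_lift.
Qed.

Lemma mtyped_unlift1 D u M n : mtyped D (lift 0 1 u) M n ->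
  exists G, env_eq D (env_cons [] G) /\ mtyped G u M n.
Proof.
  intros H. setoid_rewrite <- env_shift_0_1.
  apply (mtyped_unshift_of 0 1 u (lift 0 1 u)); auto. intros; now apply typed_unlift.
Qed.

(** * Linear substitution under weak contexts *)

(* Intended reading: [Y u] is [X] with [u] substituted for one occurrence of [k]. *)
Definition linear_subst (X : term) (Y : term -> term) (k : nat) : Prop :=
  forall G A n, typed G X A n -> exists L G' nw,
    L <> [] /\ env_eq G (env_add G' (env_one k L)) /\ n = nw + length L /\
    forall u Gu nu, mtyped Gu u L nu -> typed (env_add G' Gu) (Y u) A (nw + nu).

Lemma linear_subst_mtyped X Y k : linear_subst X Y k ->
  forall M G n, mtyped G X M n -> exists L G' nw,
    (M <> [] -> L <> []) /\ env_eq G (env_add G' (env_one k L)) /\ n = nw + length L /\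
    forall u Gu nu, mtyped Gu u L nu -> mtyped (env_add G' Gu) (Y u) M (nw + nu).
Proof.
  intros HX M; induction M; intros G n H.
  - apply mtyped_nil_inv in H as [E ->]. exists [], G, 0.
    split; [congruence |]. split; [now rewrite env_one_nil, env_add_0_r |]. split; [reflexivity |].
    intros u Gu nu (Eu & ->)%mtyped_nil_inv. constructor. now rewrite E, Eu, env_add_0_r.
  - apply mtyped_cons_inv in H as (G1 & G2 & n1 & n2 & H1 & H2 & E & ->).
    destruct (HX _ _ _ H1) as (L1 & G1' & nw1 & NE1 & E1 & -> & R1).
    destruct (IHM _ _ H2) as (L2 & G2' & nw2 & NE2 & E2 & -> & R2).
    exists (L1 ++ L2), (env_add G1' G2'), (nw1 + nw2).
    split; [destruct L1; [congruence | discriminate] |].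
    split; [rewrite E, E1, E2, env_one_app; env_solve |].
    split; [rewrite length_app; lia |].
    intros u Gu nu (Gu1 & Gu2 & nu1 & nu2 & Hu1 & Hu2 & Eu & ->)%mtyped_app_inv.
    replace (nw1 + nw2 + (nu1 + nu2)) with ((nw1 + nu1) + (nw2 + nu2)) by lia.
    econstructor; [apply R1; eauto | apply R2; eauto |]. rewrite Eu. env_solve.
Qed.

Lemma wctx_linear_subst W k :
  linear_subst (plug_w W (Var (wdepth W + k))) (fun u => plug_w W (lift 0 (wdepth W) u)) k.
Proof.
  revert k; induction W; intros k G A n H; simpl in *.
  - apply typed_var_inv in H as [E ->]. exists [A], env0, 0.
    split; [congruence |]. split; [now rewrite E, env_add_0_l |]. split; [reflexivity |].
    intros u Gu nu Hu. rewrite lift_zero, env_add_0_l. now apply mtyped_one_inv.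
  - apply typed_app_inv in H as (G1 & G2 & M & k1 & k2 & H1 & H2 & E & ->).
    destruct (IHW k _ _ _ H1) as (L & G' & nw & NE & E1 & -> & R).
    exists L, (env_add G' G2), (S (nw + k2)).
    split; [exact NE |]. split; [rewrite E, E1; env_solve |]. split; [lia |].
    intros u Gu nu Hu. replace (S (nw + k2) + nu) with (S ((nw + nu) + k2)) by lia.
    econstructor; [apply R; eauto | eauto | env_solve].
  - apply typed_app_inv in H as (G1 & G2 & M & k1 & k2 & H1 & H2 & E & ->).
    destruct (linear_subst_mtyped _ _ _ (IHW k) _ _ _ H2) as (L & G' & nw & NE & E1 & -> & R).
    exists L, (env_add G1 G'), (S (k1 + nw)).
    split; [apply NE; discriminate |]. split; [rewrite E, E1; env_solve |]. split; [lia |].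
    intros u Gu nu Hu. replace (S (k1 + nw) + nu) with (S (k1 + (nw + nu))) by lia.
    econstructor; [eauto | apply R; eauto | env_solve].
  - apply typed_es_inv in H as (G1 & G2 & M & k1 & k2 & H1 & H2 & E & ->).
    destruct (linear_subst_mtyped _ _ _ (IHW k) _ _ _ H2) as (L & G' & nw & NE & E1 & -> & R).
    exists L, (env_add G1 G'), (S (k1 + nw)).
    split; [apply NE; discriminate |]. split; [rewrite E, E1; env_solve |]. split; [lia |].
    intros u Gu nu Hu. replace (S (k1 + nw) + nu) with (S (k1 + (nw + nu))) by lia.
    econstructor; [eauto | apply R; eauto | env_solve].
  - apply typed_es_inv in H as (G1 & G2 & M & k1 & k2 & H1 & H2 & E & ->).
    rewrite <- Nat.add_succ_r in H1.
    destruct (IHW (S k) _ _ _ H1) as (L & G'' & nw & NE & E1 & -> & R).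
    rewrite env_one_S, env_add_cons_nil in E1; apply env_cons_inj in E1 as [HM E1].
    exists L, (env_add (env_tl G'') G2), (S (nw + k2)).
    split; [exact NE |]. split; [rewrite E, E1; env_solve |]. split; [lia |].
    intros u Gu nu Hu. replace (S (nw + k2) + nu) with (S ((nw + nu) + k2)) by lia.
    pose proof (R _ _ _ (mtyped_lift1 _ _ _ _ Hu)) as T.
    rewrite <- lift_succ, env_add_cons_nil in T.
    econstructor; [exact T | apply (mtyped_mset_eq _ _ _ _ _ HM H2) | env_solve].
Qed.

(* Intended reading: [X k] is [Y u] with one occurrence of [u] replaced by [k]. *)
Definition linear_antisubst (Y : term -> term) (X : nat -> term) : Prop :=
  forall u k G A n, typed G (Y u) A n -> exists L G' Gu nu nw,
    L <> [] /\ mtyped Gu u L nu /\ env_eq G (env_add G' Gu) /\ n = nw + nu /\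
    typed (env_add G' (env_one k L)) (X k) A (nw + length L).

Lemma linear_antisubst_mtyped Y X : linear_antisubst Y X ->
  forall u k M G n, mtyped G (Y u) M n -> exists L G' Gu nu nw,
    (M <> [] -> L <> []) /\ mtyped Gu u L nu /\ env_eq G (env_add G' Gu) /\ n = nw + nu /\
    mtyped (env_add G' (env_one k L)) (X k) M (nw + length L).
Proof.
  intros HY u k M; induction M; intros G n H.
  - apply mtyped_nil_inv in H as [E ->]. exists [], G, env0, 0, 0.
    split; [congruence |]. split; [now constructor |].
    split; [now rewrite env_add_0_r |]. split; [reflexivity |].
    constructor. now rewrite env_one_nil, env_add_0_r.
  - apply mtyped_cons_inv in H as (G1 & G2 & n1 & n2 & H1 & H2 & E & ->).
    destruct (HY u k _ _ _ H1) as (L1 & G1' & Gu1 & nu1 & nw1 & NE1 & U1 & E1 & -> & R1).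
    destruct (IHM _ _ H2) as (L2 & G2' & Gu2 & nu2 & nw2 & NE2 & U2 & E2 & -> & R2).
    exists (L1 ++ L2), (env_add G1' G2'), (env_add Gu1 Gu2), (nu1 + nu2), (nw1 + nw2).
    split; [destruct L1; [congruence | discriminate] |].
    split; [now apply mtyped_app |]. split; [rewrite E, E1, E2; env_solve |]. split; [lia |].
    rewrite length_app.
    replace (nw1 + nw2 + (length L1 + length L2))
      with ((nw1 + length L1) + (nw2 + length L2)) by lia.
    econstructor; eauto. rewrite env_one_app. env_solve.
Qed.

Lemma wctx_linear_antisubst W :
  linear_antisubst (fun u => plug_w W (lift 0 (wdepth W) u)) (fun k => plug_w W (Var (wdepth W + k))).
Proof.
  induction W; intros u k G A n H; simpl in *.
  - rewrite lift_zero in H. exists [A], env0, G, n, 0.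
    split; [congruence |]. split; [now apply mtyped_one |].
    split; [now rewrite env_add_0_l |]. split; [reflexivity |].
    constructor. now rewrite env_add_0_l.
  - apply typed_app_inv in H as (G1 & G2 & M & k1 & k2 & H1 & H2 & E & ->).
    destruct (IHW _ k _ _ _ H1) as (L & G' & Gu & nu & nw & NE & U & E1 & -> & R).
    exists L, (env_add G' G2), Gu, nu, (S (nw + k2)).
    split; [exact NE |]. split; [exact U |]. split; [rewrite E, E1; env_solve |]. split; [lia |].
    replace (S (nw + k2) + length L) with (S ((nw + length L) + k2)) by lia.
    econstructor; eauto. env_solve.
  - apply typed_app_inv in H as (G1 & G2 & M & k1 & k2 & H1 & H2 & E & ->).
    destruct (linear_antisubst_mtyped _ _ IHW _ k _ _ _ H2)
      as (L & G' & Gu & nu & nw & NE & U & E1 & -> & R).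
    exists L, (env_add G1 G'), Gu, nu, (S (k1 + nw)).
    split; [apply NE; discriminate |]. split; [exact U |].
    split; [rewrite E, E1; env_solve |]. split; [lia |].
    replace (S (k1 + nw) + length L) with (S (k1 + (nw + length L))) by lia.
    econstructor; eauto. env_solve.
  - apply typed_es_inv in H as (G1 & G2 & M & k1 & k2 & H1 & H2 & E & ->).
    destruct (linear_antisubst_mtyped _ _ IHW _ k _ _ _ H2)
      as (L & G' & Gu & nu & nw & NE & U & E1 & -> & R).
    exists L, (env_add G1 G'), Gu, nu, (S (k1 + nw)).
    split; [apply NE; discriminate |]. split; [exact U |].
    split; [rewrite E, E1; env_solve |]. split; [lia |].
    replace (S (k1 + nw) + length L) with (S (k1 + (nw + length L))) by lia.
    econstructor; eauto. env_solve.
  - apply typed_es_inv in H as (G1 & G2 & M & k1 & k2 & H1 & H2 & E & ->).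
    rewrite lift_succ in H1.
    destruct (IHW _ (S k) _ _ _ H1) as (L & G'' & Gu' & nu & nw & NE & U & E1 & -> & R).
    apply mtyped_unlift1 in U as (Gu & EU & U).
    rewrite EU, env_add_cons_nil in E1; apply env_cons_inj in E1 as [HM E1].
    exists L, (env_add (env_tl G'') G2), Gu, nu, (S (nw + k2)).
    split; [exact NE |]. split; [exact U |]. split; [rewrite E, E1; env_solve |]. split; [lia |].
    rewrite <- Nat.add_succ_r.
    replace (S (nw + k2) + length L) with (S ((nw + length L) + k2)) by lia.
    rewrite env_one_S, env_add_cons_nil in R.
    econstructor; [exact R | apply (mtyped_mset_eq _ _ _ _ _ HM H2) | env_solve].
Qed.

(** * The root rules *)

Lemma typed_m_reduct s t u G1 G2 M A n1 n2 :
  typed G1 (plug_s s (Lam t)) (Arr M A) n1 -> mtyped G2 u (Base :: M) n2 ->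
  typed (env_add G1 G2) (plug_s s (ES t (lift 0 (length s) u))) A (n1 + n2).
Proof.
  revert G1 G2 u n1; induction s as [|a s IH]; intros G1 G2 u n1 H1 H2; simpl in *.
  - apply typed_lam_inv in H1 as [(? & _ & _) | (M' & B & k & HA & H & ->)]; [discriminate |].
    injection HA as -> ->. rewrite lift_zero. econstructor; eauto. reflexivity.
  - apply typed_es_inv in H1 as (Ga & Gb & M' & k1 & k2 & Hb & Ha & E & ->).
    pose proof (IH _ _ _ _ Hb (mtyped_lift1 _ _ _ _ H2)) as T. rewrite <- lift_succ in T.
    assert (EE : env_eq (env_add (env_cons M' Ga) (env_cons [] G2)) (env_cons M' (env_add Ga G2)))
      by env_solve.
    rewrite EE in T. replace (S (k1 + k2) + n2) with (S ((k1 + n2) + k2)) by lia.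
    econstructor; eauto. rewrite E. env_solve.
Qed.

Lemma typed_m_redex s t u G A n :
  typed G (plug_s s (ES t (lift 0 (length s) u))) A n ->
  exists G1 G2 M n1 n2, typed G1 (plug_s s (Lam t)) (Arr M A) n1 /\
    mtyped G2 u (Base :: M) n2 /\ env_eq G (env_add G1 G2).
Proof.
  revert u G n; induction s as [|a s IH]; intros u G n H; simpl in *.
  - rewrite lift_zero in H. apply typed_es_inv in H as (G1 & G2 & M & k1 & k2 & H1 & H2 & E & ->).
    exists G1, G2, M, (S k1), k2. split; [now constructor | auto].
  - apply typed_es_inv in H as (Ga & Gb & M' & k1 & k2 & H1 & H2 & E & ->).
    rewrite lift_succ in H1.
    destruct (IH _ _ _ H1) as (G1' & G2' & M & n1 & n2 & T1 & T2 & E1).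
    apply mtyped_unlift1 in T2 as (Gu & EU & T2).
    rewrite EU, env_add_cons_nil in E1; apply env_cons_inj in E1 as [HM E1].
    exists (env_add (env_tl G1') Gb), Gu, M, (S (n1 + k2)), n2.
    split; [| split; [exact T2 | rewrite E, E1; env_solve]].
    econstructor; [| eauto | reflexivity]. now rewrite env_cons_tl.
Qed.

Lemma typed_gcv_reduct s b G1 G2 t A n1 n2 :
  typed G1 t A n1 -> typed G2 (plug_s s (Lam b)) Base (S n2) ->
  typed (env_add G1 G2) (plug_s s (lift 0 (length s) t)) A (n1 + n2).
Proof.
  revert G1 G2 t n1 n2; induction s as [|a s IH]; intros G1 G2 t n1 n2 H1 H2; simpl in *.
  - apply typed_lam_inv in H2 as [(_ & E & HH) | (M & B & k & HA & _ & _)]; [| discriminate].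
    injection HH as ->. now rewrite lift_zero, E, env_add_0_r, Nat.add_0_r.
  - apply typed_es_inv in H2 as (Ga & Gb & M & kb & ka & Hb & Ha & E & HH). injection HH as ->.
    pose proof (typed_size_pos _ _ _ _ Hb). destruct kb as [|kb]; [lia |].
    pose proof (IH _ _ _ _ _ (typed_lift1 _ _ _ _ H1) Hb) as T. rewrite <- lift_succ in T.
    assert (EE : env_eq (env_add (env_cons [] G1) (env_cons M Ga)) (env_cons M (env_add G1 Ga)))
      by env_solve.
    rewrite EE in T. replace (n1 + (S kb + ka)) with (S ((n1 + kb) + ka)) by lia.
    econstructor; eauto. rewrite E. env_solve.
Qed.

Lemma typed_gcv_redex s b t G A n :
  typed G (plug_s s (lift 0 (length s) t)) A n ->
  exists G1 G2 n1 n2, typed G1 t A n1 /\ typed G2 (plug_s s (Lam b)) Base n2 /\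
    env_eq G (env_add G1 G2).
Proof.
  revert t G n; induction s as [|a s IH]; intros t G n H; simpl in *.
  - rewrite lift_zero in H. exists G, env0, n, 1.
    split; [exact H | split; [now constructor | now rewrite env_add_0_r]].
  - apply typed_es_inv in H as (Ga & Gb & M & k1 & k2 & H1 & H2 & E & ->).
    rewrite lift_succ in H1.
    destruct (IH _ _ _ H1) as (G1' & G2' & n1 & n2 & T1 & T2 & E1).
    apply typed_unlift1 in T1 as (G1 & EU & T1).
    assert (E1' : env_eq (env_cons M Ga) (env_cons (G2' 0) (env_add (env_tl G2') G1)))
      by (rewrite E1, EU; env_solve).
    apply env_cons_inj in E1' as [HM E1'].
    exists G1, (env_add (env_tl G2') Gb), n1, (S (n2 + k2)).
    split; [exact T1 | split].
    + econstructor; [| eauto | reflexivity]. now rewrite env_cons_tl.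
    + rewrite E, E1'. env_solve.
Qed.

Lemma e_step_typed_decr W u G A n :
  typed G (ES (plug_w W (Var (wdepth W))) u) A n ->
  exists n', n' < n /\ typed G (ES (plug_w W (lift 0 (S (wdepth W)) u)) u) A n'.
Proof.
  intros (G1 & G2 & M & k1 & k2 & H1 & H2 & E & ->)%typed_es_inv.
  rewrite <- (Nat.add_0_r (wdepth W)) in H1.
  destruct (wctx_linear_subst W 0 _ _ _ H1) as (L & G' & nw & NE & E1 & -> & R).
  rewrite env_add_one_0 in E1. apply env_cons_inj in E1 as [HM E1].
  assert (P : Permutation (Base :: M) ((Base :: G' 0) ++ L))
    by (apply perm_skip, mset_eq_perm, HM).
  apply (mtyped_perm _ _ _ _ _ P), mtyped_app_inv in H2
    as (Ga & Gb & na & nb & Ha & Hb & E2 & ->).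
  pose proof (R _ _ _ (mtyped_lift1 _ _ _ _ Hb)) as T.
  rewrite <- lift_succ, env_add_cons_nil in T.
  exists (S ((nw + nb) + na)). split; [destruct L; [congruence | simpl; lia] |].
  econstructor; [exact T | exact Ha |]. rewrite E, E1, E2. env_solve.
Qed.

Lemma e_step_typed_exp W u G A n :
  typed G (ES (plug_w W (lift 0 (S (wdepth W)) u)) u) A n ->
  exists n', typed G (ES (plug_w W (Var (wdepth W))) u) A n'.
Proof.
  intros (G1 & G2 & M & k1 & k2 & H1 & H2 & E & ->)%typed_es_inv.
  rewrite lift_succ in H1.
  destruct (wctx_linear_antisubst W (lift 0 1 u) 0 _ _ _ H1)
    as (L & G' & Gu' & nu & nw & NE & U & E1 & _ & R).
  apply mtyped_unlift1 in U as (Gu & EU & U).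
  rewrite EU, env_add_cons_nil in E1. apply env_cons_inj in E1 as [HM E1].
  rewrite Nat.add_0_r, env_add_one_0 in R.
  assert (HML : mset_eq (M ++ L) (G' 0 ++ L))
    by (intros B; unfold mult; rewrite !count_occ_app; f_equal; apply HM).
  pose proof (mtyped_mset_eq _ _ _ _ _ HML (mtyped_app _ _ _ _ _ _ _ H2 U)) as T.
  eexists. econstructor; [exact R | exact T |]. rewrite E, E1. env_solve.
Qed.

Lemma root_step_typed_decr r r' G A n : root_step r r' -> typed G r A n ->
  exists n', n' < n /\ typed G r' A n'.
Proof.
  intros [s t u | W u | t s v [b ->] Hf].
  - intros (G1 & G2 & M & k1 & k2 & H1 & H2 & E & ->)%typed_app_inv.
    exists (k1 + k2). split; [lia |]. rewrite E. now apply typed_m_reduct with M.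
  - apply e_step_typed_decr.
  - intros (G1 & G2 & M & k1 & k2 & H1 & H2 & E & ->)%typed_es_inv.
    rewrite <- (lift_lower t 0 Hf) in H1.
    apply typed_unlift1 in H1 as (G1' & EU & T1). apply env_cons_inj in EU as [HM EG].
    apply mset_eq_nil in HM as ->. apply mtyped_one_inv in H2.
    pose proof (typed_size_pos _ _ _ _ H2). destruct k2 as [|k2]; [lia |].
    exists (k1 + k2). split; [lia |]. rewrite E, EG. eapply typed_gcv_reduct; eauto.
Qed.

Lemma root_step_typed_exp r r' G A n : root_step r r' -> typed G r' A n ->
  exists n', typed G r A n'.
Proof.
  intros [s t u | W u | t s v [b ->] Hf] H.
  - apply typed_m_redex in H as (G1 & G2 & M & n1 & n2 & T1 & T2 & E).
    eexists. econstructor; eauto.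
  - now apply e_step_typed_exp in H.
  - apply (typed_gcv_redex _ b) in H as (G1 & G2 & k1 & k2 & T1 & T2 & E).
    apply typed_lift1 in T1. rewrite (lift_lower t 0 Hf) in T1.
    eexists. apply TES with G1 G2 []; [exact T1 | exact (mtyped_one _ _ _ _ T2) | exact E].
Qed.

Lemma mtyped_of_typed X X' :
  (forall G A n, typed G X A n -> exists n', typed G X' A n') ->
  forall G M n, mtyped G X M n -> exists n', mtyped G X' M n'.
Proof.
  intros HX G M; revert G; induction M; intros G n H.
  - apply mtyped_nil_inv in H as [E ->]. exists 0. now constructor.
  - apply mtyped_cons_inv in H as (G1 & G2 & n1 & n2 & H1 & H2 & E & ->).
    destruct (HX _ _ _ H1) as (m1 & T1). destruct (IHM _ _ H2) as (m2 & T2).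
    exists (m1 + m2). econstructor; eauto.
Qed.

Lemma typed_plug C r r' :
  (forall G A n, typed G r A n -> exists n', typed G r' A n') ->
  forall G A n, typed G (plug C r) A n -> exists n', typed G (plug C r') A n'.
Proof.
  intros Hr; induction C; intros G A n H; simpl in *; eauto.
  - apply typed_lam_inv in H as [(-> & E & ->) | (M & B & k & -> & H & ->)].
    + exists 1. now constructor.
    + destruct (IHC _ _ _ H) as (k' & T). exists (S k'). now constructor.
  - apply typed_app_inv in H as (G1 & G2 & M & k1 & k2 & H1 & H2 & E & ->).
    destruct (IHC _ _ _ H1) as (k' & T). eexists. econstructor; eauto.
  - apply typed_app_inv in H as (G1 & G2 & M & k1 & k2 & H1 & H2 & E & ->).
    destruct (mtyped_of_typed _ _ IHC _ _ _ H2) as (k' & T). eexists. econstructor; eauto.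
  - apply typed_es_inv in H as (G1 & G2 & M & k1 & k2 & H1 & H2 & E & ->).
    destruct (IHC _ _ _ H1) as (k' & T). eexists. econstructor; eauto.
  - apply typed_es_inv in H as (G1 & G2 & M & k1 & k2 & H1 & H2 & E & ->).
    destruct (mtyped_of_typed _ _ IHC _ _ _ H2) as (k' & T). eexists. econstructor; eauto.
Qed.

Lemma typable_plug_root_step C r r' : root_step r r' ->
  typable (plug C r) <-> typable (plug C r').
Proof.
  intros Hr. split; intros (G & A & n & H).
  - destruct (typed_plug C r r') with G A n as (n' & H'); [| exact H | now exists G, A, n'].
    intros G' A' m Hm. destruct (root_step_typed_decr _ _ _ _ _ Hr Hm) as (m' & _ & T).
    now exists m'.
  - destruct (typed_plug C r' r) with G A n as (n' & H'); [| exact H | now exists G, A, n'].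
    intros G' A' m. now apply root_step_typed_exp.
Qed.

Lemma mtyped_decr X X' :
  (forall G A n, typed G X A n -> exists n', n' < n /\ typed G X' A n') ->
  forall G M n, mtyped G X M n -> exists n', n' <= n /\ (M <> [] -> n' < n) /\ mtyped G X' M n'.
Proof.
  intros HX G M; revert G; induction M; intros G n H.
  - apply mtyped_nil_inv in H as [E ->]. exists 0.
    split; [lia | split; [congruence | now constructor]].
  - apply mtyped_cons_inv in H as (G1 & G2 & n1 & n2 & H1 & H2 & E & ->).
    destruct (HX _ _ _ H1) as (m1 & L1 & T1). destruct (IHM _ _ H2) as (m2 & L2 & _ & T2).
    exists (m1 + m2). split; [lia | split; [lia | econstructor; eauto]].
Qed.

Lemma typed_plug_w_decr W r r' :
  (forall G A n, typed G r A n -> exists n', n' < n /\ typed G r' A n') ->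
  forall G A n, typed G (plug_w W r) A n -> exists n', n' < n /\ typed G (plug_w W r') A n'.
Proof.
  intros Hr; induction W; intros G A n H; simpl in *; eauto.
  - apply typed_app_inv in H as (G1 & G2 & M & k1 & k2 & H1 & H2 & E & ->).
    destruct (IHW _ _ _ H1) as (k' & Lt & T).
    exists (S (k' + k2)). split; [lia | econstructor; eauto].
  - apply typed_app_inv in H as (G1 & G2 & M & k1 & k2 & H1 & H2 & E & ->).
    destruct (mtyped_decr _ _ IHW _ _ _ H2) as (k' & _ & Lt & T).
    exists (S (k1 + k')). split; [specialize (Lt ltac:(discriminate)); lia | econstructor; eauto].
  - apply typed_es_inv in H as (G1 & G2 & M & k1 & k2 & H1 & H2 & E & ->).
    destruct (mtyped_decr _ _ IHW _ _ _ H2) as (k' & _ & Lt & T).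
    exists (S (k1 + k')). split; [specialize (Lt ltac:(discriminate)); lia | econstructor; eauto].
  - apply typed_es_inv in H as (G1 & G2 & M & k1 & k2 & H1 & H2 & E & ->).
    destruct (IHW _ _ _ H1) as (k' & Lt & T).
    exists (S (k' + k2)). split; [lia | econstructor; eauto].
Qed.

(** * Typability characterizes weak normalization *)

Lemma typed_wn n : forall G t A, typed G t A n -> weakly_normalizing t.
Proof.
  induction n as [n IH] using (well_founded_induction lt_wf). intros G t A H.
  destruct (classic (exists t', wstep t t')) as [[t' (W & r & r' & Hr & -> & ->)] | Hn].
  - destruct (typed_plug_w_decr W r r' (fun G A n => root_step_typed_decr r r' G A n Hr) _ _ _ H)
      as (n' & Lt & T').
    destruct (IH n' Lt _ _ _ T') as (v & Hv & Nv). exists v. split; [| exact Nv].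
    eapply rt_trans; [apply rt_step | exact Hv]. now exists W, r, r'.
  - exists t. split; [apply rt_refl |]. intros u Hu. apply Hn; eauto.
Qed.

Definition weak_occ (i : nat) (t : term) : Prop :=
  exists W, t = plug_w W (Var (wdepth W + i)).

Definition is_answer (t : term) : Prop := exists s b, t = plug_s s (Lam b).

Definition typed_weak_support (t : term) (A : ty) : Prop :=
  exists G n, typed G t A n /\ forall i, ~ weak_occ i t -> G i = [].

Lemma typed_weak_support_app t1 t2 A :
  typed_weak_support t1 (Arr [] A) -> typed_weak_support t2 Base ->
  typed_weak_support (App t1 t2) A.
Proof.
  intros (G1 & n1 & T1 & S1) (G2 & n2 & T2 & S2).
  exists (env_add G1 G2), (S (n1 + n2)).
  split; [apply TApp with G1 G2 []; [exact T1 | now apply mtyped_one | reflexivity] |].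
  intros i Hi. unfold env_add. rewrite S1, S2; [reflexivity | |].
  - intros (W & HW). apply Hi. exists (WAppR t1 W). simpl. now rewrite <- HW.
  - intros (W & HW). apply Hi. exists (WAppL W t2). simpl. now rewrite <- HW.
Qed.

Lemma typed_weak_support_es t1 t2 A : ~ weak_occ 0 t1 ->
  typed_weak_support t1 A -> typed_weak_support t2 Base ->
  typed_weak_support (ES t1 t2) A.
Proof.
  intros H0 (G1 & n1 & T1 & S1) (G2 & n2 & T2 & S2).
  exists (env_add (env_tl G1) G2), (S (n1 + n2)). split.
  - apply TES with (env_tl G1) G2 []; [| now apply mtyped_one | reflexivity].
    rewrite env_cons_tl; [exact T1 |]. now rewrite (S1 0 H0).
  - intros i Hi. unfold env_add, env_tl. rewrite S1, S2; [reflexivity | |].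
    + intros (W & HW). apply Hi. exists (WESR t1 W). simpl. now rewrite <- HW.
    + intros (W & HW). apply Hi. exists (WESL W t2). simpl. rewrite HW.
      now rewrite Nat.add_succ_r.
Qed.

Lemma wnormal_typed t : wnormal t ->
  typed_weak_support t Base /\ (~ is_answer t -> forall A, typed_weak_support t A).
Proof.
  induction t as [m | b _ | t1 IH1 t2 IH2 | t1 IH1 t2 IH2]; intros Hn.
  - assert (HA : forall A, typed_weak_support (Var m) A).
    { intros A. exists (env_one m [A]), 1. split; [now constructor |].
      intros i Hi. unfold env_one. destruct (Nat.eqb_spec i m) as [-> |]; [| reflexivity].
      exfalso. apply Hi. now exists WHole. }
    split; auto.
  - split.
    + exists env0, 1. split; [now constructor | reflexivity].
    + intros Ha. exfalso. apply Ha. now exists [], b.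
  - assert (N1 : ~ is_answer t1).
    { intros (s & b & ->). apply (Hn (plug_s s (ES b (lift 0 (length s) t2)))).
      exists WHole, (App (plug_s s (Lam b)) t2), (plug_s s (ES b (lift 0 (length s) t2))).
      split; [constructor | auto]. }
    apply (wnormal_plug_w (WAppL WHole t2)) in Hn as Hn1.
    apply (wnormal_plug_w (WAppR t1 WHole)) in Hn as Hn2.
    assert (HA : forall A, typed_weak_support (App t1 t2) A).
    { intros A. apply typed_weak_support_app; [exact (proj2 (IH1 Hn1) N1 _) | exact (proj1 (IH2 Hn2))]. }
    split; auto.
  - assert (N0 : ~ weak_occ 0 t1).
    { intros (W & HW). rewrite Nat.add_0_r in HW. subst t1.
      apply (Hn (ES (plug_w W (lift 0 (S (wdepth W)) t2)) t2)).
      exists WHole, (ES (plug_w W (Var (wdepth W))) t2), (ES (plug_w W (lift 0 (S (wdepth W)) t2)) t2).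
      split; [constructor | auto]. }
    apply (wnormal_plug_w (WESL WHole t2)) in Hn as Hn1.
    apply (wnormal_plug_w (WESR t1 WHole)) in Hn as Hn2.
    destruct (IH1 Hn1) as [T1 T1']. pose proof (proj1 (IH2 Hn2)) as T2.
    split; [now apply typed_weak_support_es |].
    intros Ha A. apply typed_weak_support_es; [exact N0 | apply T1' | exact T2].
    intros (s & b & ->). apply Ha. now exists (t2 :: s), b.
Qed.

Lemma wn_typable t : weakly_normalizing t -> typable t.
Proof.
  intros (v & Hv & Nv).
  assert (Tv : typable v)
    by (destruct (proj1 (wnormal_typed v Nv)) as (G & n & H & _); now exists G, Base, n).
  clear Nv. induction Hv as [t t' (W & r & r' & Hr & -> & ->) | | ]; auto.
  rewrite !plug_w_ctx in *. now apply (typable_plug_root_step _ _ _ Hr).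
Qed.

Lemma wn_iff_typable t : weakly_normalizing t <-> typable t.
Proof.
  split; [apply wn_typable |]. intros (G & A & n & H). now apply (typed_wn n G t A).
Qed.

Theorem proposition7p8 :
  (forall t u : term, wstep t u -> ctx_equiv t u) /\
  (forall t u : term, ctx_equiv t u ->
     forall C : ctx, ctx_equiv (plug C t) (plug C u)).
Proof.
  split.
  -
    intros t u (W & r & r' & Hr & -> & ->) C _ _.
    rewrite !plug_w_ctx, <- !plug_ctx_comp, !wn_iff_typable.
    now apply typable_plug_root_step.
  - intros t u H C D. rewrite <- !plug_ctx_comp. apply H.
Qed.
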